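(* Let $R$ be a Noetherian ring, $F$ a coherent functor, $M$ a finitely generated $R$-module, $M'\subseteq M$ a submodule, $I$ an ideal of $R$, $S=\bigoplus_{n\ge0}I^n$ the Rees algebra and $\operatorname{gr}(I)=\bigoplus_{n\ge0}I^n/I^{n+1}$. Extend $F$ to all $R$-modules as described in the context. Then: (a) $F\big(\bigoplus_{n\ge0}I^nM/I^nM'\big)=\bigoplus_{n\ge0}F(I^nM/I^nM')$ is a finitely generated graded $S$-module; (b) when $M'=IM$, $F\big(\bigoplus_{n\ge0}I^nM/I^{n+1}M\big)=\bigoplus_{n\ge0}F(I^nM/I^{n+1}M)$ is a finitely generated graded $\operatorname{gr}(I)$-module; (c) in (a) and (b), the module structures are the ones in which an element $x\in I^m$ acts on the degree-$n$ component via $F$ applied to the multiplication map $I^nM/I^nM'\xrightarrow{x}I^{n+m}M/I^{n+m}M'$.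
   Context: For an $R$-module $X$, $h_X=\operatorname{Hom}_R(X,-)$. A coherent functor is an $R$-linear covariant functor $F$ from finitely generated $R$-modules to finitely generated $R$-modules admitting an exact sequence $h_L\to h_K\to F\to 0$ with $K,L$ finitely generated; the map $h_L\to h_K$ is induced by a homomorphism $K\to L$, and $F$ extends to all $R$-modules by setting $F(X)=\operatorname{coker}(\operatorname{Hom}_R(L,X)\to\operatorname{Hom}_R(K,X))$. *)

From HB Require Import structures.
From mathcomp Require Import all_boot all_algebra.
From Stdlib Require List.
Set Implicit Arguments. Unset Strict Implicit. Unset Printing Implicit Defensive.
Import GRing.Theory.
Local Open Scope ring_scope.

Section Defs.
Variable R : comPzRingType.

Definition is_ideal (I : R -> Prop) : Prop :=
  I 0 /\ (forall x y, I x -> I y -> I (x + y)) /\ (forall r x, I x -> I (r * x)).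

Fixpoint ipow (I : R -> Prop) (n : nat) : R -> Prop :=
  match n with
  | 0 => fun _ => True
  | n'.+1 => fun x => exists rs : seq (R * R),
      (forall p, p \in rs -> ipow I n' p.1 /\ I p.2) /\
      x = \sum_(p <- rs) p.1 * p.2
  end.

Definition noetherian : Prop :=
  forall I : R -> Prop, is_ideal I ->
    exists gs : seq R, forall x,
      I x <-> exists cs : seq R, x = \sum_(p <- zip cs gs) p.1 * p.2.

Definition fg_mod (M : lmodType R) : Prop :=
  exists gs : seq M, forall x : M,
    exists cs : seq R, x = \sum_(p <- zip cs gs) p.1 *: p.2.

Definition is_submod (M : lmodType R) (N : M -> Prop) : Prop :=
  N 0 /\ (forall x y, N x -> N y -> N (x + y)) /\ (forall r x, N x -> N (r *: x)).

Definition prod_span (M : lmodType R) (A : R -> Prop) (N : M -> Prop) : M -> Prop :=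
  fun x => exists rs : seq (R * M),
    (forall p, p \in rs -> A p.1 /\ N p.2) /\ x = \sum_(p <- rs) p.1 *: p.2.

Definition IpowM (M : lmodType R) (I : R -> Prop) (N : M -> Prop) (n : nat) : M -> Prop :=
  prod_span (ipow I n) N.

(** The coherent functor F given by a presentation  h_L -> h_K -> F -> 0,
    induced by f : K -> L, evaluated on a subquotient module.
    We treat a family (indexed by J) of subquotients P j / Q j of an ambient
    module M, whose direct sum  (+)_j P j / Q j  is the module X of interest.
    A homomorphism K -> X is represented by  phi : K -> J -> M  with
    phi k j in P j, each phi k finitely supported, and phi linear modulo Q.
    (Every homomorphism K -> X has such a lift, by choice.) *)
Definition fin_supp (J : eqType) (M : lmodType R) (s : J -> M) : Prop :=
  exists js : seq J, forall j, j \notin js -> s j = 0.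

Definition is_hom_sq (K M : lmodType R) (J : eqType) (P Q : J -> M -> Prop)
    (phi : K -> J -> M) : Prop :=
  (forall k j, P j (phi k j)) /\ (forall k, fin_supp (phi k)) /\
  (forall a k1 k2 j, Q j (phi (a *: k1 + k2) j - (a *: phi k1 j + phi k2 j))).

(* Two homs K -> X (equal modulo Q) define the same element of
   F(X) = coker(Hom(L,X) -> Hom(K,X)) iff their difference is  psi o f
   for a hom psi : L -> X. *)
Definition F_rel (K L M : lmodType R) (f : K -> L) (J : eqType) (P Q : J -> M -> Prop)
    (phi phi' : K -> J -> M) : Prop :=
  exists psi : L -> J -> M, is_hom_sq P Q psi /\
    forall k j, Q j (phi k j - phi' k j - psi (f k) j).

Definition is_hom1 (K M : lmodType R) (P Q : M -> Prop) (phi : K -> M) : Prop :=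
  @is_hom_sq K M unit (fun _ => P) (fun _ => Q) (fun k _ => phi k).

Definition F_rel1 (K L M : lmodType R) (f : K -> L) (P Q : M -> Prop)
    (phi phi' : K -> M) : Prop :=
  @F_rel K L M f unit (fun _ => P) (fun _ => Q) (fun k _ => phi k) (fun k _ => phi' k).

(** The graded module  (+)_n F(P n / Q n):  an element is represented by
    Phi : nat -> (K -> M), Phi n a representative of the degree-n component,
    almost all components zero. *)
Definition is_gr_elt (K M : lmodType R) (P Q : nat -> M -> Prop)
    (Phi : nat -> K -> M) : Prop :=
  (forall n, is_hom1 (P n) (Q n) (Phi n)) /\
  exists N, forall n, (N <= n)%N -> Phi n = (fun _ => 0).

Definition is_rees (I : R -> Prop) (s : nat -> R) : Prop :=
  (forall n, ipow I n (s n)) /\ exists N, forall n, (N <= n)%N -> s n = 0.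

(* Representatives of elements of gr(I) = (+)_n I^n / I^(n+1): the same
   sequences, read modulo I^(n+1) in degree n. *)
Definition is_gr_rep (I : R -> Prop) (s : nat -> R) : Prop := is_rees I s.

(* Action (part (c)): x in degree m acts on the degree n component by
   F(multiplication by x), i.e. phi |-> (k |-> x *: phi k), landing in degree
   n + m. *)
Definition gr_act (K M : lmodType R) (s : nat -> R) (Phi : nat -> K -> M) : nat -> K -> M :=
  fun d k => \sum_(i < d.+1) s (d - i)%N *: Phi i k.

Definition gr_comb (K M : lmodType R) (cs : seq (nat -> R)) (gs : seq (nat -> K -> M))
    : nat -> K -> M :=
  fun d k => \sum_(p <- zip cs gs) gr_act p.1 p.2 d k.

Definition fg_graded (K L M : lmodType R) (f : K -> L) (P Q : nat -> M -> Prop)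
    (coef : (nat -> R) -> Prop) : Prop :=
  exists gs : seq (nat -> K -> M),
    (forall g, List.In g gs -> is_gr_elt P Q g) /\
    forall Phi, is_gr_elt P Q Phi ->
      exists cs : seq (nat -> R), (forall c, List.In c cs -> coef c) /\
        forall n, F_rel1 f (P n) (Q n) (Phi n) (gr_comb cs gs n).

(* The canonical map  (+)_n F(P n/Q n) -> F((+)_n P n/Q n),
   Phi |-> (k |-> (n |-> Phi n k)), is well defined, injective and surjective. *)
Definition F_commutes_sum (K L M : lmodType R) (f : K -> L) (P Q : nat -> M -> Prop) : Prop :=
  (forall Phi Phi', is_gr_elt P Q Phi -> is_gr_elt P Q Phi' ->
     ((forall n, F_rel1 f (P n) (Q n) (Phi n) (Phi' n)) <->
      @F_rel K L M f nat P Q (fun k n => Phi n k) (fun k n => Phi' n k))) /\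
  (forall phi : K -> nat -> M, @is_hom_sq K M nat P Q phi ->
     exists Phi, is_gr_elt P Q Phi /\
       @F_rel K L M f nat P Q phi (fun k n => Phi n k)).

End Defs.

From HB Require Import structures.
From mathcomp Require Import all_boot all_algebra.
From mathcomp Require Import functions zify.
From Stdlib Require List.
From Stdlib Require Import FunctionalExtensionality ClassicalEpsilon.

Set Implicit Arguments. Unset Strict Implicit. Unset Printing Implicit Defensive.
Import GRing.Theory.
Local Open Scope ring_scope.

(* Write Q_n for I^n M' (resp. I^(n+1) M).  Elements of (+)_n F(I^n M / Q_n) are
   represented by graded maps Phi : K -> (+)_n I^n M, linear modulo Q_n in each degree,
   and it suffices to span these modulo Q over the Rees algebra.  Evaluating at the
   generators k_1, ..., k_a of K and writing I = (x_1, ..., x_r), M = R m_1 + ... + R m_s,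
   the R[x_1, ..., x_r]-module R[x_1, ..., x_r]^(a s) maps onto ((+)_n I^n M)^a, with x_j
   acting as multiplication by x_j in degree one.  The preimage of the values of graded
   maps is a submodule; by the Hilbert basis theorem (proved below for modules with
   operators, via leading coefficients) it is finitely generated, and lifting its
   generators gives finitely many graded maps spanning all of them on the generators of
   K, hence everywhere modulo Q.  The commutation with the direct sum holds degreewise,
   because a map from the finitely generated K to a direct sum lands in finitely many
   summands. *)

Lemma list_choice (A B : Type) (Rel : A -> B -> Prop) (ls : seq A) :
  (forall l, List.In l ls -> exists x, Rel l x) ->
  exists xs : seq B, (forall l, List.In l ls -> exists2 x, List.In x xs & Rel l x) /\
    (forall x, List.In x xs -> exists2 l, List.In l ls & Rel l x).
Proof.
elim: ls => [|l ls IH] hls; first by exists [::].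
have [x hx] := hls l (or_introl erefl).
have [xs [hl hx']] := IH (fun l' h => hls l' (or_intror h)).
exists (x :: xs); split.
  by move=> l' [<-|/hl [x' ? ?]]; [exists x; [left|]|exists x'; [right|]].
by move=> x' [<-|/hx' [l' ? ?]]; [exists l; [left|]|exists l'; [right|]].
Qed.

Lemma In_nth (T : Type) (x0 x : T) (s : seq T) :
  List.In x s -> exists2 j, (j < size s)%N & nth x0 s j = x.
Proof.
elim: s => [|y s IH] //= [<-|/IH [j hj <-]]; first by exists 0%N.
by exists j.+1.
Qed.

Lemma nth_In (T : Type) (x0 : T) (s : seq T) j : (j < size s)%N -> List.In (nth x0 s j) s.
Proof. by elim: s j => [|y s IH] [|j] //= h; [left|right; apply: IH]. Qed.

Lemma funext2 (A B C : Type) (f g : A -> B -> C) : (forall x y, f x y = g x y) -> f = g.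
Proof. by move=> efg; do 2!apply: functional_extensionality => ?; apply: efg. Qed.

Lemma zip_sum_ind (A B : Type) (V : zmodType) (C : V -> Prop) (F : A -> B -> V)
    (cs : seq A) (gs : seq B) :
  C 0 -> (forall x y, C x -> C y -> C (x + y)) ->
  (forall c g, List.In g gs -> C (F c g)) -> C (\sum_(p <- zip cs gs) F p.1 p.2).
Proof.
move=> C0 CD CF; elim: gs cs CF => [|g gs IH] [|c cs] CF; rewrite /= ?big_nil ?big_cons //.
by apply: CD; [apply: CF; left|apply: IH => c' g' h; apply: CF; right].
Qed.

Section IncreasingFamilies.
Variables (T : Type) (C : nat -> T -> Prop).
Hypothesis C_incr : forall d x, C d x -> C d.+1 x.

Lemma increasing_le d d' x : (d <= d')%N -> C d x -> C d' x.
Proof. by move=> /subnK <-; elim: (d' - d)%N => //= k IH /IH /C_incr. Qed.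

Lemma increasing_list_bound (xs : seq T) :
  (forall x, List.In x xs -> exists d, C d x) -> exists D, forall x, List.In x xs -> C D x.
Proof.
elim: xs => [|x xs IH] hxs; first by exists 0%N.
have [D hD] := IH (fun y hy => hxs y (or_intror hy)).
have [d hd] := hxs x (or_introl erefl).
exists (maxn D d) => y [<-|hy]; first by apply: increasing_le hd; apply: leq_maxr.
by apply: increasing_le (hD y hy); apply: leq_maxl.
Qed.

End IncreasingFamilies.

Section OperatorModules.
Variables (R : comPzRingType) (V : lmodType R) (ops : seq (V -> V)).

Definition op_closed (N : V -> Prop) : Prop :=
  [/\ N 0, forall x y, N x -> N y -> N (x + y), forall c x, N x -> N (c *: x)
    & forall op x, List.In op ops -> N x -> N (op x)].

Definition op_span (G : seq V) (x : V) : Prop :=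
  forall N, op_closed N -> (forall g, List.In g G -> N g) -> N x.

Definition op_noetherian (U : V -> Prop) : Prop :=
  forall N, op_closed N -> (forall x, N x -> U x) ->
    exists2 G, (forall g, List.In g G -> N g) & forall x, N x -> op_span G x.

Lemma op_closedB N x y : op_closed N -> N x -> N y -> N (x - y).
Proof. by case=> _ ND NZ _ hx /(NZ (-1)); rewrite scaleN1r; apply: ND. Qed.

Lemma op_closedI N N' : op_closed N -> op_closed N' -> op_closed (fun x => N x /\ N' x).
Proof.
case=> N0 ND NZ Nop [N'0 N'D N'Z N'op]; split=> //.
- by move=> x y [? ?] [? ?]; split; [apply: ND|apply: N'D].
- by move=> c x [? ?]; split; [apply: NZ|apply: N'Z].
- by move=> op x hop [? ?]; split; [apply: Nop|apply: N'op].
Qed.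

Lemma op_closed_increasing_union (C : nat -> V -> Prop) :
  (forall d, op_closed (C d)) -> (forall d x, C d x -> C d.+1 x) ->
  op_closed (fun x => exists d, C d x).
Proof.
move=> hC C_incr; have le := increasing_le C_incr.
split.
- by exists 0%N; case: (hC 0%N).
- move=> x y [d hx] [d' hy]; exists (maxn d d'); case: (hC (maxn d d')) => _ CD _ _.
  by apply: CD; [apply: le hx; apply: leq_maxl|apply: le hy; apply: leq_maxr].
- by move=> c x [d hx]; exists d; case: (hC d) => _ _ CZ _; apply: CZ.
- by move=> op x hop [d hx]; exists d; case: (hC d) => _ _ _ Cop; apply: Cop.
Qed.

Lemma op_closed_sum (N : V -> Prop) (I : Type) (r : seq I) (P : pred I) (F : I -> V) :
  op_closed N -> (forall i, P i -> N (F i)) -> N (\sum_(i <- r | P i) F i).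
Proof. by case=> N0 ND _ _ NF; apply: big_ind. Qed.

Lemma op_span_closed G : op_closed (op_span G).
Proof.
split.
- by move=> N [].
- by move=> x y hx hy N hN hG; case: (hN) => _ ND _ _; apply: ND; [apply: hx|apply: hy].
- by move=> c x hx N hN hG; case: (hN) => _ _ NZ _; apply: NZ; apply: hx.
- by move=> op x hop hx N hN hG; case: (hN) => _ _ _ Nop; apply: Nop => //; apply: hx.
Qed.

Lemma op_span_gen G g : List.In g G -> op_span G g.
Proof. by move=> hg N _; apply. Qed.

Lemma op_span_subset G G' x :
  (forall g, List.In g G -> List.In g G') -> op_span G x -> op_span G' x.
Proof. by move=> sGG' hx N hN hG'; apply: hx => // g /sGG'; apply: hG'. Qed.

End OperatorModules.

Section SequenceLift.
Variables (R : comPzRingType) (V : lmodType R).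

Definition pointwise (op : V -> V) (f : nat -> V) : nat -> V := fun n => op (f n).

Definition shift (f : nat -> V) : nat -> V := fun n => if n is n'.+1 then f n' else 0.

Definition deg_le (d : nat) (f : nat -> V) : Prop := forall n, (d < n)%N -> f n = 0.

Lemma iter_shift_deg k d f : deg_le d f -> deg_le (d + k)%N (iter k shift f).
Proof.
elim: k => [|k IH] hf; first by rewrite addn0.
by move=> [|n] //=; rewrite addnS ltnS; apply: IH.
Qed.

Lemma iter_shift_top k d f : iter k shift f (d + k)%N = f d.
Proof. by elim: k => [|k IH]; rewrite ?addn0 // addnS. Qed.

Variables (ops : seq (V -> V)) (extra : seq ((nat -> V) -> nat -> V)).
Hypothesis ops0 : forall op, List.In op ops -> op 0 = 0.
Local Notation lift_ops := (extra ++ map pointwise ops).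

Definition lead_coefs (N : (nat -> V) -> Prop) (d : nat) (v : V) : Prop :=
  exists f, [/\ N f, deg_le d f & f d = v].

Definition lifts_lead_coefs (G : seq (nat -> V)) (N : (nat -> V) -> Prop) (d : nat) : Prop :=
  forall v, lead_coefs N d v -> lead_coefs (op_span lift_ops G) d v.

Lemma lead_coefs_closed N d : op_closed lift_ops N -> op_closed ops (lead_coefs N d).
Proof.
case=> N0 ND NZ Nop; split.
- by exists 0.
- move=> _ _ [f [Nf df <-]] [g [Ng dg <-]]; exists (f + g); split=> //; first exact: ND.
  by move=> n hn; rewrite !fctE df ?dg ?addr0.
- move=> c _ [f [Nf df <-]]; exists (c *: f); split=> //; first exact: NZ.
  by move=> n hn; rewrite !fctE df ?scaler0.
- move=> op _ hop [f [Nf df <-]]; exists (pointwise op f); split=> //.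
    by apply: Nop Nf; apply: List.in_or_app; right; apply: List.in_map.
  by move=> n hn; rewrite /pointwise df ?ops0.
Qed.

(* Induction on the degree: subtracting a lift of the top coefficient lowers it. *)
Lemma span_of_lead_coefs N G :
  op_closed lift_ops N -> (forall g, List.In g G -> N g) -> (forall d, lifts_lead_coefs G N d) ->
  forall f, N f -> (exists d, deg_le d f) -> op_span lift_ops G f.
Proof.
move=> hN GN GL f Nf [d df].
suff : forall d f, N f -> (forall n, (d <= n)%N -> f n = 0) -> op_span lift_ops G f.
  by apply=> //; apply: df.
have [S0 SD _ _] := op_span_closed lift_ops G.
elim=> [|{}d IH] {}f {}Nf {}df.
  by have -> : f = 0 by apply: functional_extensionality => n; apply: df.
have [h [Sh dh ehd]] := GL d (f d) (ex_intro _ f (And3 Nf (fun n hn => df n hn) erefl)).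
have Nh : N h by apply: Sh.
have -> : f = (f - h) + h by rewrite subrK.
apply: SD => //; apply: IH; first exact: (op_closedB hN Nf Nh).
move=> n; rewrite !fctE leq_eqVlt => /orP [/eqP <-|hn]; first by rewrite ehd subrr.
by rewrite df // dh // subrr.
Qed.

Section Noetherian.
Variables (U : V -> Prop) (N : (nat -> V) -> Prop).
Hypotheses (hU : op_noetherian ops U) (hN : op_closed lift_ops N)
  (NU : forall f, N f -> forall n, U (f n)).

Lemma lifts_lead_coefs_exist d :
  exists2 G, (forall g, List.In g G -> N g) & lifts_lead_coefs G N d.
Proof.
have lead_coefsU v : lead_coefs N d v -> U v by move=> [f [Nf _ <-]]; apply: NU.
have [ls lsN Nls] := hU (lead_coefs_closed d hN) lead_coefsU.
have [G [GN NG]] := list_choice lsN.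
exists G; first by move=> g /NG [l _ []].
move=> v /Nls; apply; first exact/lead_coefs_closed/op_span_closed.
by move=> l /GN [g Gg [Ng dg <-]]; exists g; split=> //; apply: op_span_gen.
Qed.

Lemma lifts_lead_coefs_upto D :
  exists2 G, (forall g, List.In g G -> N g) & forall e, (e <= D)%N -> lifts_lead_coefs G N e.
Proof.
elim: D => [|D [G GN GL]].
  by have [G GN GL] := lifts_lead_coefs_exist 0; exists G => // e; rewrite leqn0 => /eqP ->.
have [G' G'N G'L] := lifts_lead_coefs_exist D.+1.
exists (G ++ G').
  by move=> g /(List.in_app_or G G' g) [/GN|/G'N].
move=> e; rewrite leq_eqVlt => /orP [/eqP ->|he] v.
  move=> /G'L [h [Sh ? ?]]; exists h; split=> //.
  by apply: op_span_subset Sh => g hg; apply: List.in_or_app; right.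
move=> /(GL e he) [h [Sh ? ?]]; exists h; split=> //.
by apply: op_span_subset Sh => g hg; apply: List.in_or_app; left.
Qed.

End Noetherian.
End SequenceLift.
Arguments pointwise {R V} op f n.
Arguments shift {R V} f n.

Section HilbertBasis.
Variables (R : comPzRingType) (V : lmodType R) (ops : seq (V -> V)) (U : V -> Prop).
Hypothesis ops0 : forall op, List.In op ops -> op 0 = 0.

Definition fin_supp_in (f : nat -> V) : Prop := (forall n, U (f n)) /\ exists d, deg_le d f.

Definition supp_below_in (m : nat) (f : nat -> V) : Prop :=
  (forall n, U (f n)) /\ forall n, (m <= n)%N -> f n = 0.

Local Notation poly_ops := (shift :: map pointwise ops).

Lemma fin_supp_closed : op_closed ops U -> op_closed poly_ops fin_supp_in.
Proof.
case=> U0 UD UZ Uop; split.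
- by split=> //; exists 0%N.
- move=> f g [Uf [d df]] [Ug [e dg]]; split=> [n|]; first exact: UD.
  by exists (maxn d e) => n; rewrite gtn_max => /andP [hd he]; rewrite !fctE df ?dg ?addr0.
- move=> c f [Uf [d df]]; split=> [n|]; first exact: UZ.
  by exists d => n hn; rewrite !fctE df ?scaler0.
- move=> op f /= [<-|/List.in_map_iff [op' [<- hop']]] [Uf [d df]].
    by split; [case|exists d.+1; case=> //= n hn; apply: df].
  split=> [n|]; first exact: Uop.
  by exists d => n hn; rewrite /pointwise df ?ops0.
Qed.

Lemma supp_below_closed m : op_closed ops U -> op_closed (map pointwise ops) (supp_below_in m).
Proof.
case=> U0 UD UZ Uop; split.
- by split.
- move=> f g [Uf df] [Ug dg]; split=> [n|n hn]; first exact: UD.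
  by rewrite !fctE df ?dg ?addr0.
- move=> c f [Uf df]; split=> [n|n hn]; first exact: UZ.
  by rewrite !fctE df ?scaler0.
- move=> op f /List.in_map_iff [op' [<- hop']] [Uf df].
  by split=> [n|n hn]; [apply: Uop|rewrite /pointwise df ?ops0].
Qed.

Lemma lead_coefs_shift N d v : op_closed poly_ops N -> lead_coefs N d v -> lead_coefs N d.+1 v.
Proof.
case=> _ _ _ Nop [f [Nf df <-]]; exists (shift f); split=> //; first by apply: Nop => //=; left.
by case.
Qed.

Lemma lead_coefs_stable N :
  op_noetherian ops U -> op_closed poly_ops N -> (forall f, N f -> forall n, U (f n)) ->
  exists D, forall d v, lead_coefs N d v -> lead_coefs N D v.
Proof.
move=> hU hN NU.
have lead_coefs_incr d v := @lead_coefs_shift N d v hN.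
have LU v : (exists d, lead_coefs N d v) -> U v by move=> [d [f [Nf _ <-]]]; apply: NU.
have incr_closed := op_closed_increasing_union
  (fun d => lead_coefs_closed (extra := [:: shift]) ops0 d hN) lead_coefs_incr.
have [ls lsL Lls] := hU _ incr_closed LU.
have [D hD] := increasing_list_bound lead_coefs_incr lsL.
exists D => d v hv; apply: (Lls v (ex_intro _ d hv)) => //.
exact: (lead_coefs_closed (extra := [:: shift]) ops0 D hN).
Qed.

(* The leading coefficients of degree D account for all degrees: shifting a lift from
   degree D to degree d is allowed since [shift] is one of the operators. *)
Theorem hilbert_basis : op_noetherian ops U -> op_noetherian poly_ops fin_supp_in.
Proof.
move=> hU N hN hNU.
have NU f : N f -> forall n, U (f n) by move=> /hNU [].
have [D stable] := lead_coefs_stable hU hN NU.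
have [G GN GL] := lifts_lead_coefs_upto (extra := [:: shift]) ops0 hU hN NU D.
exists G => // f Nf.
apply: (span_of_lead_coefs (extra := [:: shift]) hN GN) => //; last by case: (hNU f Nf).
move=> d v hv; case: (leqP d D) => hdD; first exact: GL.
have [h [Sh dh <-]] := GL D (leqnn D) v (stable d v hv).
exists (iter (d - D) shift h); split.
- elim: (d - D)%N => //= k IH; have [_ _ _ Sop] := op_span_closed poly_ops G.
  by apply: Sop => //=; left.
- by have := iter_shift_deg (k := d - D) dh; rewrite subnKC // ltnW.
- by have := iter_shift_top (d - D) D h; rewrite subnKC // ltnW.
Qed.

Theorem noetherian_supp_below m :
  op_noetherian ops U -> op_noetherian (map pointwise ops) (supp_below_in m).
Proof.
move=> hU N hN hNU.
have NU f : N f -> forall n, U (f n) by move=> /hNU [].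
have [G GN GL] := lifts_lead_coefs_upto (extra := [::]) ops0 hU hN NU m.
exists G => // f Nf; apply: (span_of_lead_coefs (extra := [::]) hN GN) => //.
  move=> d v; case: (leqP d m) => hdm; first exact: GL.
  move=> [g [Ng _ <-]]; exists 0; split=> //.
    by case: (op_span_closed (map pointwise ops) G).
  by case: (hNU g Ng) => _ ->; [|apply: ltnW].
by exists m => n /ltnW; case: (hNU f Nf) => _; apply.
Qed.

End HilbertBasis.

Lemma zip_sum_mem (R : comPzRingType) (gs : seq R) x : List.In x gs ->
  exists cs : seq R, x = \sum_(p <- zip cs gs) p.1 * p.2.
Proof.
elim: gs => [|g gs IH] //= [<-|/IH [cs ->]].
  by exists [:: 1]; case: gs {IH} => [|? ?]; rewrite /= big_cons big_nil mul1r addr0.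
by exists (0 :: cs); rewrite /= big_cons mul0r add0r.
Qed.

Lemma ring_noetherian (R : comPzRingType) :
  noetherian R -> op_noetherian (V := R^o) [::] (fun _ => True).
Proof.
move=> hR N [N0 ND NZ _] _.
have [gs hgs] := hR N (conj N0 (conj ND NZ)).
exists gs; first by move=> g /zip_sum_mem /hgs.
move=> x /hgs [cs ->] C [C0 CD CZ _] Cgs.
by apply: zip_sum_ind => // c g hg; apply: CZ; apply: Cgs.
Qed.

Section Tower.
Variables (R : comPzRingType) (m : nat).

(* [tower r] is R[x_1, ..., x_r]^m: [r] nested finitely supported sequences over R^m,
   itself encoded as sequences supported below [m]; [tower_ops r] are the
   multiplications by the variables. *)
Fixpoint tower (r : nat) : lmodType R :=
  if r is r'.+1 then (nat -> tower r' : lmodType R) else (nat -> R^o : lmodType R).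

Fixpoint tower_ops (r : nat) : seq (tower r -> tower r) :=
  match r return seq (tower r -> tower r) with
  | 0 => [::]
  | r'.+1 => shift :: map pointwise (tower_ops r')
  end.

Fixpoint tower_supp (r : nat) : tower r -> Prop :=
  match r return tower r -> Prop with
  | 0 => supp_below_in (fun _ : R^o => True) m
  | r'.+1 => fin_supp_in (@tower_supp r')
  end.
Arguments tower_supp r _ : clear implicits.

Lemma size_tower_ops r : size (tower_ops r) = r.
Proof. by elim: r => //= r IH; rewrite size_map IH. Qed.

Lemma tower_ops0 r op : List.In op (tower_ops r) -> op 0 = 0.
Proof.
elim: r op => [|r IH] op //= [<-|/List.in_map_iff [op' [<- /IH hop']]].
  by apply: functional_extensionality; case.
by apply: functional_extensionality => n; rewrite /pointwise hop'.
Qed.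

Lemma tower_supp_closed r : op_closed (tower_ops r) (tower_supp r).
Proof.
elim: r => [|r IH]; last exact: fin_supp_closed (@tower_ops0 r) IH.
by apply: (supp_below_closed (ops := [::])) => //; split.
Qed.

Theorem tower_noetherian r : noetherian R -> op_noetherian (tower_ops r) (tower_supp r).
Proof.
move=> hR; elim: r => [|r IH]; last exact: hilbert_basis (@tower_ops0 r) IH.
exact: (noetherian_supp_below (ops := [::]) (fun _ (h : List.In _ [::]) => False_ind _ h)
  (ring_noetherian hR)).
Qed.

End Tower.
Arguments tower_supp {R} m r _.

Lemma submod_op_closed (R : comPzRingType) (M : lmodType R) (Q : M -> Prop) :
  is_submod Q -> op_closed [::] Q.
Proof. by case=> Q0 [QD QZ]; split. Qed.

Section IdealPowers.
Variables (R : comPzRingType) (I : R -> Prop).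

Lemma ipow0 n : ipow I n 0.
Proof. by case: n => //= n; exists [::]; rewrite big_nil. Qed.

Lemma ipowD n x y : ipow I n x -> ipow I n y -> ipow I n (x + y).
Proof.
case: n => //= n [rs [hrs ->]] [rs' [hrs' ->]].
by exists (rs ++ rs'); rewrite big_cat; split=> // p; rewrite mem_cat => /orP [/hrs|/hrs'].
Qed.

Lemma ipowMl n r x : ipow I n x -> ipow I n (r * x).
Proof.
elim: n r x => //= n IH r x [rs [hrs ->]].
exists [seq (r * p.1, p.2) | p <- rs]; split.
  by move=> p /mapP [q /hrs [h1 h2] ->]; split=> //; apply: IH.
by rewrite big_map mulr_sumr; apply: eq_bigr => p _; rewrite mulrA.
Qed.

Lemma ipowMI n x y : ipow I n x -> I y -> ipow I n.+1 (x * y).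
Proof. by move=> hx hy; exists [:: (x, y)]; rewrite big_seq1; split=> // p /[!inE] /eqP ->. Qed.

Lemma ipow1 x : I x -> ipow I 1 x.
Proof. by move=> hx; rewrite -(mul1r x); apply: ipowMI. Qed.

Lemma ipowS_ind n (C : R -> Prop) :
  C 0 -> (forall x y, C x -> C y -> C (x + y)) ->
  (forall s y, ipow I n s -> I y -> C (s * y)) -> forall x, ipow I n.+1 x -> C x.
Proof.
move=> C0 CD Cgen x [rs [hrs ->]]; rewrite big_seq.
by apply: big_ind => // p /hrs [? ?]; apply: Cgen.
Qed.

Lemma ipowM m n s t : ipow I m s -> ipow I n t -> ipow I (n + m)%N (s * t).
Proof.
elim: m s => [|m IH] s; first by rewrite addn0 => _; apply: ipowMl.
move=> hs ht; apply: (ipowS_ind (C := fun s => ipow I (n + m.+1)%N (s * t))) hs.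
- by rewrite mul0r; apply: ipow0.
- by move=> x y hx hy; rewrite mulrDl; apply: ipowD.
- by move=> s' y hs' hy; rewrite addnS mulrAC; apply: ipowMI => //; apply: IH.
Qed.

Section Filtrations.
Variable M : lmodType R.

Lemma prod_span_ind (A : R -> Prop) (N : M -> Prop) (C : M -> Prop) :
  C 0 -> (forall x y, C x -> C y -> C (x + y)) ->
  (forall r z, A r -> N z -> C (r *: z)) -> forall x, prod_span A N x -> C x.
Proof.
move=> C0 CD Cgen x [rs [hrs ->]]; rewrite big_seq.
by apply: big_ind => // p /hrs [? ?]; apply: Cgen.
Qed.

Lemma prod_span_gen (A : R -> Prop) (N : M -> Prop) r z :
  A r -> N z -> prod_span A N (r *: z).
Proof. by move=> hr hz; exists [:: (r, z)]; rewrite big_seq1; split=> // p /[!inE] /eqP ->. Qed.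

Lemma prod_span_submod (A : R -> Prop) (N : M -> Prop) :
  (forall r t, A t -> A (r * t)) -> is_submod (prod_span A N).
Proof.
move=> AM; split; first by exists [::]; rewrite big_nil.
split=> [x y [rs [hrs ->]] [rs' [hrs' ->]]|r x [rs [hrs ->]]].
  by exists (rs ++ rs'); rewrite big_cat; split=> // p; rewrite mem_cat => /orP [/hrs|/hrs'].
exists [seq (r * p.1, p.2) | p <- rs]; split.
  by move=> p /mapP [q /hrs [h1 h2] ->]; split=> //; apply: AM.
by rewrite big_map scaler_sumr; apply: eq_bigr => p _; rewrite scalerA.
Qed.

Definition ideal_filtration (Q : nat -> M -> Prop) : Prop :=
  (forall n, is_submod (Q n)) /\
  forall m n s x, ipow I m s -> Q n x -> Q (n + m)%N (s *: x).

Lemma IpowM_filtration (N : M -> Prop) : ideal_filtration (IpowM I N).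
Proof.
split=> [n|m n s x hs]; first exact/prod_span_submod/ipowMl.
apply: (prod_span_ind (C := fun x => IpowM I N (n + m)%N (s *: x))).
- by rewrite scaler0; case: (prod_span_submod N (@ipowMl (n + m)%N)).
- move=> y z hy hz; rewrite scalerDr.
  by case: (prod_span_submod N (@ipowMl (n + m)%N)) => _ [SD _]; apply: SD.
- by move=> r z hr hz; rewrite scalerA; apply: prod_span_gen => //; apply: ipowM.
Qed.

Lemma filtration_succ Q : ideal_filtration Q -> ideal_filtration (fun n => Q n.+1).
Proof. by case=> hQ QM; split=> // m n s x hs hx /=; rewrite -addSn; exact: QM hs hx. Qed.

Lemma filtration0 (F : nat -> M -> Prop) n : ideal_filtration F -> F n 0.
Proof. by case=> /(_ n) []. Qed.

Lemma filtration_closed (F : nat -> M -> Prop) n :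
  ideal_filtration F -> op_closed [::] (F n).
Proof. by case=> hF _; apply: submod_op_closed. Qed.

Lemma filtration_xscale (F : nat -> M -> Prop) x n v :
  ideal_filtration F -> I x -> F n v -> F n.+1 (x *: v).
Proof. by case=> _ FM hx hv; rewrite -addn1; apply: FM hv; apply: ipow1. Qed.

End Filtrations.
End IdealPowers.

Section LinearModulo.
Variables (R : comPzRingType) (K M : lmodType R).

Definition linear_mod (Q : M -> Prop) (h : K -> M) : Prop :=
  forall c k1 k2, Q (h (c *: k1 + k2) - (c *: h k1 + h k2)).

Lemma linear_mod_closed Q : is_submod Q -> op_closed [::] (linear_mod Q).
Proof.
move=> /submod_op_closed [Q0 QD QZ _]; split=> // [c k1 k2|h h' hh hh' c k1 k2|d h hh c k1 k2].
- by change (Q (0 - (c *: 0 + 0))); rewrite scaler0 addr0 subrr.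
- by rewrite !fctE scalerDr addrACA opprD addrACA; apply: QD.
- by rewrite !fctE scalerA mulrC -scalerA -scalerDr -scalerBr; apply: QZ.
Qed.

Lemma linear_mod_scale (Q Q' : M -> Prop) (s : R) h :
  (forall v, Q v -> Q' (s *: v)) -> linear_mod Q h -> linear_mod Q' (s *: h).
Proof.
move=> QQ' hh c k1 k2; rewrite !fctE scalerA mulrC -scalerA -scalerDr -scalerBr.
exact: QQ'.
Qed.

Lemma linear_mod_gen Q (ks : seq K) h :
  is_submod Q -> (forall k, exists cs : seq R, k = \sum_(p <- zip cs ks) p.1 *: p.2) ->
  linear_mod Q h -> (forall k, List.In k ks -> Q (h k)) -> forall k, Q (h k).
Proof.
move=> /submod_op_closed hQ hks hh hgen k; have [Q0 QD QZ _] := hQ.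
have h0 : Q (h 0).
  have := hh 1 0 0; rewrite !scale1r !addr0 opprD addrA subrr add0r.
  by move=> /(QZ (-1)); rewrite scaleN1r opprK.
have hDZ c k1 k2 : Q (h k1) -> Q (h k2) -> Q (h (c *: k1 + k2)).
  move=> h1 h2; rewrite -(subrK (c *: h k1 + h k2) (h _)).
  exact: QD (hh c k1 k2) (QD _ _ (QZ c _ h1) h2).
have [cs ->] := hks k.
apply: (zip_sum_ind (C := fun k => Q (h k))) => // [x y hx hy|c g /hgen hg].
  by have := hDZ 1 x y hx hy; rewrite scale1r.
by have := hDZ c g 0 hg h0; rewrite addr0.
Qed.

End LinearModulo.

Section GradedShift.
Variables (R : comPzRingType) (V : lmodType R).

Definition xshift (x : R) (f : nat -> V) : nat -> V :=
  fun n => if n is n'.+1 then x *: f n' else 0.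

Lemma xshift0 x : xshift x 0 = 0.
Proof. by apply: functional_extensionality => -[|n] //; exact: scaler0. Qed.

Lemma xshiftD x f g : xshift x (f + g) = xshift x f + xshift x g.
Proof. by apply: functional_extensionality => -[|n] /=; rewrite !fctE ?addr0 // scalerDr. Qed.

Lemma xshift_sum x (J : Type) (r : seq J) (F : J -> nat -> V) :
  xshift x (\sum_(j <- r) F j) = \sum_(j <- r) xshift x (F j).
Proof. exact: (big_morph _ (xshiftD x) (xshift0 x)). Qed.

End GradedShift.
Arguments xshift {R V} x f n.

Section GradedElements.
Variables (R : comPzRingType) (K M : lmodType R) (I : R -> Prop) (P Q : nat -> M -> Prop).
Hypotheses (hP : ideal_filtration I P) (hQ : ideal_filtration I Q).

Lemma is_gr_eltP (Phi : nat -> K -> M) :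
  is_gr_elt P Q Phi <->
  [/\ forall n k, P n (Phi n k), forall n, linear_mod (Q n) (Phi n)
    & exists N, forall n, (N <= n)%N -> Phi n = 0].
Proof.
split=> [[hom bd]|[hP' hQ' bd]].
  split=> // n; have [h1 [_ h3]] := hom n.
    by move=> k; apply: (h1 k tt).
  by move=> c k1 k2; apply: (h3 c k1 k2 tt).
split=> // n; split=> [k _|]; first exact: hP'.
by split=> [k|c k1 k2 _]; [exists [:: tt]; case|apply: hQ'].
Qed.

Lemma gr_elt_closed xs :
  (forall x, List.In x xs -> I x) -> op_closed (map xshift xs) (is_gr_elt (K := K) P Q).
Proof.
move=> xsI; split.
- apply/is_gr_eltP; split=> [n k|n|]; last by exists 0%N.
    by case: (filtration_closed n hP).
  by case: (linear_mod_closed K (proj1 hQ n)).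
- move=> Phi Phi' /is_gr_eltP [P1 Q1 [N1 b1]] /is_gr_eltP [P2 Q2 [N2 b2]].
  apply/is_gr_eltP; split=> [n k|n|].
  + by case: (filtration_closed n hP) => _ PD _ _; apply: PD.
  + by case: (linear_mod_closed K (proj1 hQ n)) => _ LD _ _; apply: LD.
  + exists (maxn N1 N2) => n; rewrite geq_max => /andP [h1 h2].
    by rewrite addrfctE /= b1 // b2 // addr0.
- move=> c Phi /is_gr_eltP [P1 Q1 [N1 b1]]; apply/is_gr_eltP; split=> [n k|n|].
  + by case: (filtration_closed n hP) => _ _ PZ _; apply: PZ.
  + by case: (linear_mod_closed K (proj1 hQ n)) => _ _ LZ _; apply: LZ.
  + by exists N1 => n hn; rewrite scalrfctE /= b1 // scaler0.
- move=> op Phi /List.in_map_iff [x [<- /xsI hx]] /is_gr_eltP [P1 Q1 [N1 b1]].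
  apply/is_gr_eltP; split=> [[|n] k|[|n]|] /=.
  + by case: (filtration_closed 0 hP).
  + exact: filtration_xscale hP hx (P1 n k).
  + by case: (linear_mod_closed K (proj1 hQ 0)).
  + by apply: linear_mod_scale (Q1 n) => v; apply: filtration_xscale hQ hx.
  + by exists N1.+1 => -[|n] // hn; rewrite /= b1 // scaler0.
Qed.

Lemma rees_closed xs :
  (forall x, List.In x xs -> I x) -> op_closed (V := nat -> R^o) (map xshift xs) (is_rees I).
Proof.
move=> xsI; split.
- by split=> [n|]; [exact: (ipow0 I n)|exists 0%N].
- move=> s s' [I1 [N1 b1]] [I2 [N2 b2]]; split=> [n|]; first exact: ipowD.
  exists (maxn N1 N2) => n; rewrite geq_max => /andP [h1 h2].
  by rewrite addrfctE /= b1 // b2 // addr0.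
- move=> c s [I1 [N1 b1]]; split=> [n|]; first exact: ipowMl.
  by exists N1 => n hn; rewrite scalrfctE /= b1 // scaler0.
- move=> op s /List.in_map_iff [x [<- /xsI hx]] [I1 [N1 b1]]; split.
    by case=> [|n] //=; rewrite -[_ *: _]/(x * s n) mulrC; apply: ipowMI.
  by exists N1.+1 => -[|n] // hn; rewrite /= b1 // scaler0.
Qed.

End GradedElements.

Section GradedAction.
Variables (R : comPzRingType) (K M : lmodType R) (I : R -> Prop) (P Q : nat -> M -> Prop).
Hypotheses (hP : ideal_filtration I P) (hQ : ideal_filtration I Q).
Implicit Types (s : nat -> R^o) (Phi : nat -> K -> M).

Lemma gr_actD s s' Phi : gr_act (s + s') Phi = gr_act s Phi + gr_act s' Phi.
Proof.
apply: funext2 => d k.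
change (gr_act (s + s') Phi d k = gr_act s Phi d k + gr_act s' Phi d k).
by rewrite /gr_act -big_split; apply: eq_bigr => i _; rewrite scalerDl.
Qed.

Lemma gr_actZ c s Phi : gr_act (c *: s) Phi = c *: gr_act s Phi.
Proof.
apply: funext2 => d k.
change (gr_act (c *: s) Phi d k = c *: gr_act s Phi d k).
by rewrite /gr_act scaler_sumr; apply: eq_bigr => i _; rewrite scalerA.
Qed.

Lemma gr_act0 Phi : gr_act 0 Phi = 0.
Proof.
apply: funext2 => d k.
by rewrite /gr_act big1 // => i _; apply: scale0r.
Qed.

Lemma gr_act_xshift x s Phi : gr_act (xshift x s) Phi = xshift x (gr_act s Phi).
Proof.
apply: funext2 => -[|d] k.
  by rewrite /gr_act big_ord1; apply: scale0r.
change (gr_act (xshift x s) Phi d.+1 k = x *: gr_act s Phi d k).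
rewrite /gr_act big_ord_recr /= subnn scale0r addr0 scaler_sumr.
by apply: eq_bigr => i _; rewrite (subSn (ltnSE (ltn_ord i))) scalerA.
Qed.

Lemma gr_act1 Phi : gr_act (fun n => (n == 0%N)%:R : R^o) Phi = Phi.
Proof.
apply: funext2 => d k.
rewrite /gr_act big_ord_recr /= subnn scale1r big1 ?add0r // => i _.
by rewrite subn_eq0 leqNgt ltn_ord scale0r.
Qed.

Lemma gr_act_gr_elt s Phi :
  is_rees I s -> is_gr_elt P Q Phi -> is_gr_elt P Q (gr_act s Phi).
Proof.
move=> [sI [Ns bs]] /is_gr_eltP [PPhi QPhi [NP bP]]; apply/is_gr_eltP; split.
- move=> d k; have [P0 PD _ _] := filtration_closed d hP; apply: big_ind => // i _.
  have [_ PM] := hP; have := PM _ _ _ _ (sI (d - i)%N) (PPhi i k).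
  by rewrite (subnKC (ltnSE (ltn_ord i))).
- move=> d; have -> : gr_act s Phi d = \sum_(i < d.+1) s (d - i)%N *: Phi i.
    by rewrite fct_sumE.
  apply: op_closed_sum; first exact/linear_mod_closed/(proj1 hQ).
  move=> i _; apply: linear_mod_scale (QPhi i) => v hv.
  have [_ QM] := hQ; have := QM _ _ _ _ (sI (d - i)%N) hv.
  by rewrite (subnKC (ltnSE (ltn_ord i))).
- exists (Ns + NP)%N => d hd; apply: functional_extensionality => k.
  rewrite /gr_act big1 // => i _; case: (ltnP i NP) => hi; last by rewrite bP // scaler0.
  by rewrite bs ?scale0r //; lia.
Qed.

Section LinearCombinations.
Variable gs : seq (nat -> K -> M).

Definition gr_lincomb (c : nat -> nat -> R^o) : nat -> K -> M :=
  \sum_(j < size gs) gr_act (c j) gs`_j.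

Definition gr_span (Phi : nat -> K -> M) : Prop :=
  exists2 c : nat -> nat -> R^o, (forall j, is_rees I (c j)) & Phi = gr_lincomb c.

Lemma gr_comb_mkseq c n k : gr_comb (mkseq c (size gs)) gs n k = gr_lincomb c n k.
Proof.
rewrite /gr_comb /gr_lincomb fct_sumE.
elim: gs c => [|g l IH] c; first by rewrite big_nil big_ord0.
rewrite /= /mkseq /= -[1%N]/(1 + 0)%N iotaDl -map_comp big_cons big_ord_recl /=.
by rewrite (IH (fun j => c j.+1)).
Qed.

Lemma gr_span_closed xs :
  (forall x, List.In x xs -> I x) -> op_closed (map xshift xs) gr_span.
Proof.
move=> xsI; have [R0 RD RZ Rop] := rees_closed xsI.
split.
- exists 0 => [j|]; first exact: R0.
  by rewrite /gr_lincomb big1 // => j _; apply: gr_act0.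
- move=> _ _ [c hc ->] [c' hc' ->]; exists (c + c') => [j|]; first exact: RD.
  by rewrite /gr_lincomb -big_split; apply: eq_bigr => j _; exact/esym/(gr_actD (c j) (c' j)).
- move=> d _ [c hc ->]; exists (d *: c) => [j|]; first exact: RZ.
  by rewrite /gr_lincomb scaler_sumr; apply: eq_bigr => j _; exact/esym/(gr_actZ d (c j)).
- move=> op _ /List.in_map_iff [x [<- hx]] [c hc ->].
  exists (fun j => xshift x (c j)) => [j|]; first by apply: Rop (hc j); apply: List.in_map.
  by rewrite /gr_lincomb xshift_sum; apply: eq_bigr => j _; rewrite gr_act_xshift.
Qed.

Lemma gr_span_gen j : (j < size gs)%N -> gr_span gs`_j.
Proof.
move=> hj; exists (fun j' => if j' == j then fun n => (n == 0%N)%:R else 0).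
  move=> j'; case: eqP => _; last by split=> [n|]; [exact: (ipow0 I n)|exists 0%N].
  by split=> [[|n]|]; [|exact: (ipow0 I n.+1)|exists 1%N => -[|n]].
rewrite /gr_lincomb (bigD1 (Ordinal hj)) //= eqxx /= gr_act1 big1 ?addr0 // => j' hj'.
by move: hj'; rewrite -val_eqE /= => /negbTE ->; apply: gr_act0.
Qed.

Lemma gr_span_gr_elt : (forall g, List.In g gs -> is_gr_elt P Q g) ->
  forall Phi, gr_span Phi -> is_gr_elt P Q Phi.
Proof.
move=> gsP _ [c hc ->]; apply: (op_closed_sum (ops := [::])) => [|j _].
  by apply: (gr_elt_closed K (xs := [::]) hP hQ) => x [].
by apply: gr_act_gr_elt => //; apply/gsP/nth_In.
Qed.

End LinearCombinations.
End GradedAction.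

Section NearGenerators.
Variables (R : comPzRingType) (K M : lmodType R) (I : R -> Prop) (Q : nat -> M -> Prop).
Hypothesis hQ : ideal_filtration I Q.
Variable ks : seq K.

Definition congr_gens (S : (nat -> K -> M) -> Prop) (v : nat -> 'I_(size ks) -> M) : Prop :=
  exists Phi, S Phi /\ forall n i, Q n (v n i - Phi n ks`_i).

Lemma congr_gens_closed xs S :
  (forall x, List.In x xs -> I x) -> op_closed (map xshift xs) S ->
  op_closed (map xshift xs) (congr_gens S).
Proof.
move=> xsI [S0 SD SZ Sop]; have hQn n := filtration_closed n hQ.
split.
- exists 0; split=> // n i; change (Q n (0 - 0)); rewrite subrr; by case: (hQn n).
- move=> v w [Phi [SPhi hv]] [Psi [SPsi hw]]; exists (Phi + Psi); split=> [|n i]; first exact: SD.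
  change (Q n ((v n i + w n i) - (Phi n ks`_i + Psi n ks`_i))).
  by rewrite opprD addrACA; case: (hQn n) => _ QD _ _; apply: QD.
- move=> c v [Phi [SPhi hv]]; exists (c *: Phi); split=> [|n i]; first exact: SZ.
  change (Q n (c *: v n i - c *: Phi n ks`_i)); rewrite -scalerBr.
  by case: (hQn n) => _ _ QZ _; apply: QZ.
- move=> op v /List.in_map_iff [x [<- hx]] [Phi [SPhi hv]].
  exists (xshift x Phi); split=> [|[|n] i]; first by apply: Sop SPhi; apply: List.in_map.
    by change (Q 0 (0 - 0)); rewrite subrr; case: (hQn 0).
  change (Q n.+1 (x *: v n i - x *: Phi n ks`_i)); rewrite -scalerBr.
  exact: filtration_xscale hQ (xsI x hx) (hv n i).
Qed.

End NearGenerators.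
Arguments congr_gens {R K M} Q ks S v.

Section Intertwining.
Variables (R : comPzRingType) (V W : lmodType R) (opsV : seq (V -> V)) (opsW : seq (W -> W)).
Variable phi : V -> W.
Hypotheses (phiD : {morph phi : x y / x + y}) (phiZ : forall c, {morph phi : x / c *: x}).
Hypotheses (size_ops : size opsV = size opsW)
  (phi_ops : forall j x, (j < size opsV)%N -> phi (nth id opsV j x) = nth id opsW j (phi x)).

Lemma morph0 : phi 0 = 0.
Proof. by rewrite -(scale0r 0) phiZ scale0r. Qed.

Lemma preim_op_closed H : op_closed opsW H -> op_closed opsV (fun x => H (phi x)).
Proof.
case=> H0 HD HZ Hop; split=> [|x y hx hy|c x hx|op x /(In_nth id) [j hj <-] hx].
- by rewrite morph0.
- by rewrite phiD; apply: HD.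
- by rewrite phiZ; apply: HZ.
- by rewrite phi_ops //; apply: Hop hx; apply: nth_In; rewrite -size_ops.
Qed.

Lemma image_op_closed N :
  op_closed opsV N -> op_closed opsW (fun w => exists2 x, N x & phi x = w).
Proof.
case=> N0 ND NZ Nop; split.
- by exists 0; rewrite ?morph0.
- by move=> _ _ [x Nx <-] [y Ny <-]; exists (x + y); rewrite ?phiD //; apply: ND.
- by move=> c _ [x Nx <-]; exists (c *: x); rewrite ?phiZ //; apply: NZ.
- move=> op _ /(In_nth id) [j hj <-] [x Nx <-]; rewrite -size_ops in hj.
  by exists (nth id opsV j x); [apply: Nop Nx; apply: nth_In|apply: phi_ops].
Qed.

End Intertwining.

Lemma sum_fun_apply (T : Type) (V : zmodType) (J : Type) (r : seq J) (P : pred J)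
    (F : J -> T -> V) x :
  (\sum_(j <- r | P j) F j) x = \sum_(j <- r | P j) F j x.
Proof. by rewrite fct_sumE. Qed.

Section Deltas.
Variables (R : comPzRingType) (V : lmodType R) (a : nat).

Definition delta (n : nat) (i : 'I_a) (w : V) : nat -> 'I_a -> V :=
  fun n' i' => if (n' == n) && (i' == i) then w else 0.

Lemma delta0 n i : delta n i 0 = 0.
Proof. by apply: funext2 => n' i'; rewrite /delta; case: ifP. Qed.

Lemma deltaD n i w w' : delta n i (w + w') = delta n i w + delta n i w'.
Proof.
apply: funext2 => n' i'.
by rewrite /delta !fctE; case: ifP; rewrite ?addr0.
Qed.

Lemma deltaZ n i c w : delta n i (c *: w) = c *: delta n i w.
Proof.
apply: funext2 => n' i'.
by rewrite /delta !fctE; case: ifP; rewrite ?scaler0.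
Qed.

Lemma delta_xshift n i x w : delta n.+1 i (x *: w) = xshift x (delta n i w).
Proof.
apply: funext2 => -[|n'] i' //=.
by rewrite /delta !fctE eqSS; case: ifP; rewrite ?scaler0.
Qed.

Lemma delta_sum (v : nat -> 'I_a -> V) N : (forall n, (N <= n)%N -> v n = 0) ->
  v = \sum_(n < N) \sum_(i < a) delta n i (v n i).
Proof.
move=> vN; apply: funext2 => n i.
rewrite !sum_fun_apply; under eq_bigr => n' _ do rewrite !sum_fun_apply.
case: (ltnP n N) => hn; last first.
  rewrite vN // big1 // => n' _; rewrite big1 // => i' _; rewrite /delta.
  by case: eqP => // en; move: (ltn_ord n'); rewrite -en ltnNge hn.
rewrite (bigD1 (Ordinal hn)) //= (bigD1 i) //= /delta !eqxx /= big1 ?addr0 => [|i' hi'].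
  rewrite big1 ?addr0 // => n' hn'; rewrite big1 // => i' _.
  by rewrite -val_eqE /= eq_sym in hn'; rewrite (negbTE hn').
by rewrite eq_sym (negbTE hi').
Qed.

End Deltas.

Section TowerEvaluation.
Variables (R : comPzRingType) (M : lmodType R) (a : nat) (ms : seq M).

Definition base_eval (c : nat -> R) : nat -> 'I_a -> M :=
  fun n i => if n is 0 then \sum_(j < size ms) c (i * size ms + j)%N *: ms`_j else 0.

(* The variables are evaluated at [xs], outermost first; base coordinate [i * size ms + j]
   is paired with [ms`_j] in component [i]. *)
Fixpoint tower_eval (xs : seq R) : tower R (size xs) -> nat -> 'I_a -> M :=
  match xs return tower R (size xs) -> nat -> 'I_a -> M with
  | [::] => base_eval
  | x :: xs' => fun p n i => \sum_(k < n.+1) x ^+ k *: @tower_eval xs' (p k) (n - k)%N i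
  end.
Arguments tower_eval xs _ _ _ : clear implicits.

Lemma tower_evalD xs : {morph tower_eval xs : p q / p + q}.
Proof.
move=> p q; apply: funext2 => n i.
change (tower_eval xs (p + q) n i = tower_eval xs p n i + tower_eval xs q n i).
elim: xs p q n => [|x xs IH] p q n /=.
  by case: n => [|n]; rewrite ?addr0 // -big_split; apply: eq_bigr => j _; rewrite scalerDl.
by rewrite -big_split; apply: eq_bigr => k _; rewrite IH scalerDr.
Qed.

Lemma tower_evalZ xs c : {morph tower_eval xs : p / c *: p}.
Proof.
move=> p; apply: funext2 => n i.
change (tower_eval xs (c *: p) n i = c *: tower_eval xs p n i).
elim: xs p n => [|x xs IH] p n /=.
  by case: n => [|n]; rewrite ?scaler0 // scaler_sumr; apply: eq_bigr => j _; rewrite scalerA.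
by rewrite scaler_sumr; apply: eq_bigr => k _; rewrite IH !scalerA mulrC.
Qed.

Lemma tower_eval0 xs n i : tower_eval xs 0 n i = 0.
Proof. by rewrite (morph0 (@tower_evalZ xs)). Qed.

Lemma tower_eval_ops xs j p : (j < size xs)%N ->
  tower_eval xs (nth id (tower_ops R (size xs)) j p) = xshift xs`_j (tower_eval xs p).
Proof.
move=> hj; apply: funext2 => n i.
elim: xs j hj p n => [|x xs IH] [|j] //= hj p [|n]; rewrite /xshift /= ?scalrfctE /=.
- by rewrite big_ord1 /= tower_eval0 scaler0.
- rewrite big_ord_recl /= tower_eval0 scaler0 add0r scaler_sumr.
  by apply: eq_bigr => k _; rewrite /bump /= add1n subSS exprS -scalerA.
- by rewrite big_ord1 (nth_map id) ?size_tower_ops // /pointwise IH //= scaler0.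
rewrite big_ord_recr /= subnn (nth_map id) ?size_tower_ops // /pointwise IH //= scaler0 addr0.
rewrite scaler_sumr; apply: eq_bigr => k _; rewrite IH //.
by rewrite (subSn (ltnSE (ltn_ord k))) /= scalrfctE /= !scalerA mulrC.
Qed.

Fixpoint tower_unit (r t : nat) : tower R r :=
  match r return tower R r with
  | 0 => fun n => (n == t)%:R
  | r'.+1 => fun k => if k is 0 then tower_unit r' t else 0
  end.

Lemma tower_eval_unit xs t n i :
  tower_eval xs (tower_unit (size xs) t) n i = base_eval (fun n => (n == t)%:R) n i.
Proof.
elim: xs n => [|x xs IH] n //=.
rewrite big_ord_recl /= IH expr0 scale1r subn0 big1 ?addr0 // => k _.
by rewrite tower_eval0 scaler0.
Qed.

Lemma tower_supp_unit m r t : (t < m)%N -> tower_supp m r (tower_unit r t).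
Proof.
move=> htm; elim: r => [|r IH] /=.
  split=> // n hn; rewrite (_ : (n == t) = false) //.
  by apply/negbTE; rewrite neq_ltn (leq_trans htm hn) orbT.
split; last by exists 0%N => -[].
by case=> //= k; case: (tower_supp_closed R m r).
Qed.

Lemma base_eval_unit (i : 'I_a) j : (j < size ms)%N ->
  base_eval (fun n => (n == i * size ms + j)%N%:R) = delta 0 i ms`_j.
Proof.
move=> hj; apply: funext2 => -[|n] i'; rewrite /delta //=.
have idx (i'' : 'I_a) j' :
    (j' < size ms)%N -> (i'' * size ms + j' == i * size ms + j)%N = (i'' == i) && (j' == j).
  move=> hj'; apply/eqP/andP => [e|[/eqP -> /eqP ->]] //.
  have s_gt0 : (0 < size ms)%N by apply: leq_ltn_trans hj.
  have ei : i'' = i :> nat.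
    by have := congr1 (divn^~ (size ms)) e; rewrite !divnMDl // !divn_small // !addn0.
  by move: e; rewrite ei => /addnI ->; split=> //; apply/eqP/val_inj.
case: (eqVneq i' i) => [->|ne].
  rewrite (bigD1 (Ordinal hj)) //= eqxx scale1r big1 ?addr0 // => j' hj'.
  by move: hj'; rewrite idx // eqxx -val_eqE /= => /negbTE ->; rewrite scale0r.
by rewrite big1 // => j' _; rewrite idx // (negbTE ne) scale0r.
Qed.

End TowerEvaluation.
Arguments tower_eval {R M a} ms xs _ _ _.

Section TowerImage.
Variables (R : comPzRingType) (M : lmodType R) (I : R -> Prop).
Variables (a : nat) (ms : seq M) (xs : seq R).
Hypotheses (hms : forall w : M, exists cs : seq R, w = \sum_(p <- zip cs ms) p.1 *: p.2)
  (hxs : forall x, I x <-> exists cs : seq R, x = \sum_(p <- zip cs xs) p.1 * p.2).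

Definition tower_image (v : nat -> 'I_a -> M) : Prop :=
  exists2 p, tower_supp (a * size ms) (size xs) p & tower_eval ms xs p = v.

Lemma gens_in_ideal x : List.In x xs -> I x.
Proof. by move=> /zip_sum_mem /hxs. Qed.

Lemma tower_image_closed : op_closed (map xshift xs) tower_image.
Proof.
apply: (image_op_closed (opsV := tower_ops R (size xs)) (@tower_evalD _ _ _ ms xs)
  (@tower_evalZ _ _ _ ms xs)).
- by rewrite size_tower_ops size_map.
- move=> j p; rewrite size_tower_ops => hj.
  by rewrite tower_eval_ops // (nth_map 0).
- exact: tower_supp_closed.
Qed.

Lemma delta_image_closed n i : op_closed [::] (fun w => tower_image (delta n i w)).
Proof.
have [Im0 ImD ImZ _] := tower_image_closed.
split=> // [|w w' hw hw'|c w hw]; first by rewrite delta0.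
  by rewrite deltaD; apply: ImD.
by rewrite deltaZ; apply: ImZ.
Qed.

Lemma delta_gen_in_image i j : (j < size ms)%N -> tower_image (delta 0 i ms`_j).
Proof.
move=> hj; exists (tower_unit R (size xs) (i * size ms + j)).
  apply: tower_supp_unit; apply: (@leq_trans (i.+1 * size ms)).
    by rewrite mulSn addnC ltn_add2r.
  by rewrite leq_mul2r ltn_ord orbT.
by rewrite -base_eval_unit //; apply: funext2 => n i'; rewrite tower_eval_unit.
Qed.

(* Entries of degree [n + 1] are reached from entries of degree [n] through the
   operators [xshift x], [x] in [xs], since [I^(n+1) M = sum_x x I^n M]. *)
Lemma delta_in_image n i w : IpowM I (fun _ => True) n w -> tower_image (delta n i w).
Proof.
elim: n i w => [|n IH] i w.
  move=> _; have [cs ->] := hms w; have [D0 DD DZ _] := delta_image_closed 0 i.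
  apply: (zip_sum_ind (C := fun w => tower_image (delta 0 i w))) => // c g /(In_nth 0) [j hj <-].
  by apply: DZ; apply: delta_gen_in_image.
have [D0 DD DZ _] := delta_image_closed n.+1 i.
move: w; apply: (prod_span_ind (A := ipow I n.+1) (N := fun _ : M => True)
  (C := fun w => tower_image (delta n.+1 i w))) => // r z hr _.
apply: (ipowS_ind (C := fun r => tower_image (delta n.+1 i (r *: z)))) hr.
- by rewrite scale0r.
- by move=> r1 r2 h1 h2; rewrite scalerDl; apply: DD.
move=> s y hs /hxs [cs ->]; rewrite mulr_sumr scaler_suml.
apply: (zip_sum_ind (C := fun w => tower_image (delta n.+1 i w))
  (F := fun c x => (s * (c * x)) *: z)) => // c x hx.
rewrite mulrA mulrC -scalerA delta_xshift; have [_ _ _ Imop] := tower_image_closed.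
apply: Imop; first exact: (List.in_map xshift xs x hx).
by apply: IH; apply: prod_span_gen => //; rewrite mulrC; apply: ipowMl.
Qed.

Lemma tower_image_graded (v : nat -> 'I_a -> M) :
  (forall n i, IpowM I (fun _ => True) n (v n i)) ->
  (exists N, forall n, (N <= n)%N -> v n = 0) -> tower_image v.
Proof.
move=> hv [N vN]; rewrite (delta_sum vN); have hIm := tower_image_closed.
apply: (op_closed_sum _ hIm) => n _; apply: (op_closed_sum _ hIm) => i _.
exact: delta_in_image.
Qed.

End TowerImage.

Section FunctorRelations.
Variables (R : comPzRingType) (K L M : lmodType R) (f : K -> L) (J : eqType).
Variables (P Q : J -> M -> Prop).
Hypotheses (P0 : forall j, P j 0) (Q0 : forall j, Q j 0).

Lemma is_hom_sq0 (X : lmodType R) : is_hom_sq P Q (fun (_ : X) _ => 0).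
Proof.
split=> [x j //|]; split=> [x|c x1 x2 j]; first by exists [::].
by rewrite scaler0 !addr0 subrr.
Qed.

Lemma F_rel_of_congr (phi phi' : K -> J -> M) :
  (forall k j, Q j (phi k j - phi' k j)) -> F_rel f P Q phi phi'.
Proof.
by move=> hQ; exists (fun _ _ => 0); split=> [|k j]; [apply: is_hom_sq0|rewrite subr0].
Qed.

End FunctorRelations.

Section FiniteGeneration.
Variables (R : comPzRingType) (K L M : lmodType R) (f : K -> L) (I : R -> Prop).
Variable Q : nat -> M -> Prop.
Hypotheses (hR : noetherian R) (hQ : ideal_filtration I Q).
Variables (ks : seq K) (ms : seq M) (xs : seq R).
Hypotheses (hks : forall k : K, exists cs : seq R, k = \sum_(p <- zip cs ks) p.1 *: p.2)
  (hms : forall w : M, exists cs : seq R, w = \sum_(p <- zip cs ms) p.1 *: p.2)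
  (hxs : forall x, I x <-> exists cs : seq R, x = \sum_(p <- zip cs xs) p.1 * p.2).

Local Notation P := (IpowM I (fun _ : M => True)).
Local Notation graded := (is_gr_elt (K := K) P Q).
Local Notation eval := (tower_eval (a := size ks) ms xs).
Local Notation ops := (tower_ops R (size xs)).

Let hP := IpowM_filtration I (fun _ : M => True).
Let xsI := gens_in_ideal hxs.

Lemma congr_gens_preim_closed (S : (nat -> K -> M) -> Prop) :
  op_closed (map xshift xs) S -> op_closed ops (fun p => congr_gens Q ks S (eval p)).
Proof.
move=> hS; apply: (preim_op_closed (opsW := map xshift xs) (@tower_evalD _ _ _ ms xs)
  (@tower_evalZ _ _ _ ms xs)).
- by rewrite size_tower_ops size_map.
- by move=> j p; rewrite size_tower_ops => hj; rewrite tower_eval_ops // (nth_map 0).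
- exact: (congr_gens_closed hQ ks xsI hS).
Qed.

Lemma gr_elt_congr_from_gens (Phi Psi : nat -> K -> M) n :
  graded Phi -> graded Psi -> (forall i : 'I_(size ks), Q n (Phi n ks`_i - Psi n ks`_i)) ->
  forall k, Q n (Phi n k - Psi n k).
Proof.
move=> /is_gr_eltP [_ linPhi _] /is_gr_eltP [_ linPsi _] hgen.
have QS := proj1 hQ n.
have lin := op_closedB (linear_mod_closed K QS) (linPhi n) (linPsi n).
apply: (linear_mod_gen QS hks lin) => k /(In_nth 0) [i hi <-].
exact: (hgen (Ordinal hi)).
Qed.

(* Noetherianity of the tower supplies finitely many graded elements [gs] whose
   values on the generators [ks] span, modulo [Q], those of every graded element. *)
Theorem graded_fin_gen : fg_graded f P Q (is_rees I).
Proof.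
pose N p := tower_supp (size ks * size ms) (size xs) p /\ congr_gens Q ks graded (eval p).
have N_closed : op_closed ops N.
  apply: op_closedI; first exact: tower_supp_closed.
  exact/congr_gens_preim_closed/(gr_elt_closed K hP hQ xsI).
have [G GN NG] := tower_noetherian hR N_closed (fun p (Np : N p) => proj1 Np).
have [gs [Ggs gsG]] := list_choice (fun g hg => proj2 (GN g hg)).
have gs_graded g : List.In g gs -> graded g by move=> /gsG [? _ []].
pose C p := congr_gens Q ks (gr_span I gs) (eval p).
have C_closed : op_closed ops C by apply/congr_gens_preim_closed/(gr_span_closed gs xsI).
have GC g : List.In g G -> C g.
  move=> /Ggs [Phi /(In_nth 0) [j hj <-] [_ hcongr]].
  by exists gs`_j; split=> //; apply: gr_span_gen.
exists gs; split=> // Phi gPhi.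
have [p supp_p eval_p] : tower_image ms xs (fun n (i : 'I_(size ks)) => Phi n ks`_i).
  have /is_gr_eltP [PPhi _ [NPhi bPhi]] := gPhi.
  by apply: (tower_image_graded hms hxs) => [n i|]; [apply: PPhi|exists NPhi => n /bPhi ->].
have [Psi [[c hc ePsi] hcongr]] : C p.
  apply: (NG p) => //; split=> //; exists Phi; split=> // n i.
  by rewrite eval_p subrr; apply: (filtration0 n hQ).
exists (mkseq c (size gs)); split.
  by move=> c' /List.in_map_iff [j [<- _]]; apply: hc.
move=> n; apply: F_rel_of_congr => [_|_|k _]; [exact: filtration0 hP|exact: filtration0 hQ|].
rewrite gr_comb_mkseq -ePsi.
apply: gr_elt_congr_from_gens => // [|i]; first by apply: (gr_span_gr_elt hP hQ gs_graded); exists c.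
by have := hcongr n i; rewrite eval_p.
Qed.

End FiniteGeneration.

Section SumCommutation.
Variables (R : comPzRingType) (K L M : lmodType R) (f : K -> L) (I : R -> Prop).
Variables (P Q : nat -> M -> Prop) (ks : seq K).
Hypotheses (hP : ideal_filtration I P) (hQ : ideal_filtration I Q)
  (hks : forall k : K, exists cs : seq R, k = \sum_(p <- zip cs ks) p.1 *: p.2).

Local Notation graded := (is_gr_elt (K := K) P Q).

Let P0 n : P n 0 := filtration0 n hP.
Let Q0 n : Q n 0 := filtration0 n hQ.

Lemma F_rel_sum_components Phi Phi' :
  F_rel f P Q (fun k n => Phi n k) (fun k n => Phi' n k) ->
  forall n, F_rel1 f (P n) (Q n) (Phi n) (Phi' n).
Proof.
move=> [psi [[Ppsi [_ Lpsi]] hrel]] n; exists (fun l _ => psi l n).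
split=> [|k _]; last exact: hrel.
split=> [l _|]; first exact: Ppsi.
by split=> [l|c l1 l2 _]; [exists [:: tt]; case|apply: Lpsi].
Qed.

(* The components of [psi] are chosen degree by degree; beyond the common support of
   [Phi] and [Phi'] they can be taken to be zero. *)
Lemma F_rel_sum_of_components Phi Phi' : graded Phi -> graded Phi' ->
  (forall n, F_rel1 f (P n) (Q n) (Phi n) (Phi' n)) ->
  F_rel f P Q (fun k n => Phi n k) (fun k n => Phi' n k).
Proof.
move=> /is_gr_eltP [_ _ [N bN]] /is_gr_eltP [_ _ [N' bN']] /choice [psi hpsi].
pose B := maxn N N'.
exists (fun l n => if (n < B)%N then psi n l tt else 0); split.
  split=> [l n|]; first by case: ifP => _ //; case: (hpsi n) => -[Ppsi _] _; apply: Ppsi.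
  split=> [l|c l1 l2 n].
    by exists (iota 0 B) => n; rewrite mem_iota leq0n add0n /= => /negbTE ->.
  case: ifP => _; last by rewrite scaler0 !addr0 subrr.
  by case: (hpsi n) => -[_ [_ Lpsi]] _; apply: Lpsi.
move=> k n /=; case: ifP => hn; first by case: (hpsi n) => _; apply.
move/negbT: hn; rewrite -leqNgt geq_max => /andP [hN hN'].
by rewrite bN // bN' // !subrr.
Qed.

(* A map into the direct sum is truncated at a degree beyond which it vanishes on the
   generators [ks], hence modulo [Q] everywhere. *)
Lemma F_rel_sum_truncate (phi : K -> nat -> M) : is_hom_sq P Q phi ->
  exists Phi, graded Phi /\ F_rel f P Q phi (fun k n => Phi n k).
Proof.
move=> [Pphi [Fphi Lphi]].
have [B hB] : exists B, forall k, List.In k ks -> forall n, (B <= n)%N -> phi k n = 0.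
  apply: (increasing_list_bound (C := fun d k => forall n, (d <= n)%N -> phi k n = 0)).
    by move=> d k hk n /ltnW; apply: hk.
  move=> k _; have [js hjs] := Fphi k; exists (\max_(j <- js) j.+1) => n hn; apply: hjs.
  apply/negP => hin.
  by have := leq_trans (@leq_bigmax_seq _ js xpredT succn n hin isT) hn; rewrite ltnn.
exists (fun n k => if (n < B)%N then phi k n else 0); split.
  apply/is_gr_eltP; split=> [n k|n c k1 k2|]; first by case: ifP => _ //; apply: Pphi.
    by case: ifP => _; [apply: Lphi|rewrite scaler0 !addr0 subrr].
  by exists B => n hn; apply: functional_extensionality => k; rewrite ltnNge hn.
apply: F_rel_of_congr => // k n /=; case: ifP => hn; first by rewrite subrr.
rewrite subr0; move: k; apply: (linear_mod_gen (proj1 hQ n) hks (h := fun k => phi k n)).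
  by move=> c k1 k2; apply: Lphi.
by move=> k hk; rewrite hB // leqNgt hn.
Qed.

Theorem F_sum_commutes : F_commutes_sum f P Q.
Proof.
split=> [Phi Phi' gPhi gPhi'|]; last exact: F_rel_sum_truncate.
by split; [apply: F_rel_sum_of_components|apply: F_rel_sum_components].
Qed.

End SumCommutation.

Theorem corollary2p14 (R : comPzRingType) (K L M : lmodType R) (f : {linear K -> L})
    (M' : M -> Prop) (I : R -> Prop) :
  noetherian R -> fg_mod K -> fg_mod L -> fg_mod M ->
  is_submod M' -> is_ideal I ->
  (* (a), (c):  F((+)_n I^nM/I^nM') = (+)_n F(I^nM/I^nM'), f.g. over S *)
  (F_commutes_sum f (IpowM I (fun _ : M => True)) (IpowM I M') /\
   fg_graded f (IpowM I (fun _ : M => True)) (IpowM I M') (is_rees I)) /\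
  (* (b), (c):  F((+)_n I^nM/I^(n+1)M) = (+)_n F(I^nM/I^(n+1)M), f.g. over gr(I) *)
  (F_commutes_sum f (IpowM I (fun _ : M => True)) (fun n => IpowM I (fun _ : M => True) n.+1) /\
   fg_graded f (IpowM I (fun _ : M => True)) (fun n => IpowM I (fun _ : M => True) n.+1)
     (is_gr_rep I)).
Proof.
move=> hR [ks hks] _ [ms hms] _ hI.
have [xs hxs] := hR I hI.
have hP := IpowM_filtration I (fun _ : M => True).
have hQa := IpowM_filtration I M'.
have hQb := filtration_succ hP.
split; split.
- exact: F_sum_commutes hP hQa hks.
- exact: (graded_fin_gen _ hR hQa hks hms hxs).
- exact: F_sum_commutes hP hQb hks.
- exact: (graded_fin_gen _ hR hQb hks hms hxs).
Qed.
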